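(* Let $w_0,w_1$ be finite words in the alphabet $\{0,1\}$ which both start with $10$. Then $R(w_0\cdot w_1)=R(w_0)\cdot R(w_1)$, where $\cdot$ denotes concatenation.
   Context: For $k\ge1$ set $\sigma(0^k)=0^k$, $\sigma(1^{2k})=(12)^k$, $\sigma(1^{2k-1})=2(12)^{k-1}$. Let $\Sigma_1\subseteq\{0,1\}^{\mathbb{N}}$ be the set of sequences that are eventually constantly $1$. The recoding map $R:\{0,1\}^{\mathbb{N}}\setminus\Sigma_1\to\{0,1,2\}^{\mathbb{N}}$ is defined by writing $\mathbf{a}=1^{a_0}0^{a_1}1^{a_2}0^{a_3}\cdots$ with $a_0\ge0$ and $a_i\ge1$ for $i\ge1$ (maximal blocks) and setting $R(\mathbf{a})=\sigma(1^{a_0})\sigma(0^{a_1})\sigma(1^{a_2})\sigma(0^{a_3})\cdots$ (with $\sigma(1^0)$ the empty word). For a finite word $w=a_1\cdots a_m\in\{0,1\}^m$ with $w\ne1^m$, write $R(w^\infty)=b_1b_2\cdots$ and define $R(w):=b_1\cdots b_m$. *)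

From Stdlib Require Import ClassicalEpsilon.
From mathcomp Require Import all_boot.

Set Implicit Arguments.
Unset Strict Implicit.
Unset Printing Implicit Defensive.

(* Binary letters are booleans: true = 1, false = 0.
   Output letters {0,1,2} are natural numbers 0,1,2. *)

Definition sigma1 (L : nat) : seq nat :=
  if odd L then 2 :: flatten (nseq L./2 [:: 1; 2])
  else flatten (nseq L./2 [:: 1; 2]).
Definition sigma0 (k : nat) : seq nat := nseq k 0.

Fixpoint run_start (a : nat -> bool) (i : nat) : nat :=
  match i with
  | 0 => 0
  | i'.+1 => if a i' == a i then run_start a i' else i
  end.

(* For a not eventually constantly 1: the least j >= i with a j = 0,
   i.e. one past the end of the block of 1s containing i (when a i = 1). *)
Definition run_end1 (a : nat -> bool) (i : nat) : nat :=
  epsilon (inhabits 0%N)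
    (fun j => (i <= j)%N /\ a j = false /\
              (forall k, (i <= k)%N -> (k < j)%N -> a k = true)).

(* The recoding map R on infinite binary sequences (not eventually 1):
   R(a) = sigma(1^a0) sigma(0^a1) sigma(1^a2) ...  Since sigma is length
   preserving, the letter of R(a) at position i is the letter at offset
   (i - s) of sigma(block), where s is the start of the maximal block
   containing i. *)
Definition Rinf (a : nat -> bool) (i : nat) : nat :=
  if a i then nth 0 (sigma1 (run_end1 a i - run_start a i)) (i - run_start a i)
  else nth 0 (sigma0 (i.+1 - run_start a i)) (i - run_start a i).

Definition wpow (w : seq bool) : nat -> bool :=
  fun i => nth false w (i %% size w).

(* R(w) for a finite word w <> 1^m : the first |w| letters of R(w^infinity).
   (Unspecified, here [::], when w = 1^m.) *)
Definition Rw (w : seq bool) : seq nat :=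
  if all id w then [::] else mkseq (Rinf (wpow w)) (size w).

(* The letter of R(a) at position i is determined by the block of a containing
   i: by whether it is a block of 0s or of 1s, by the offset of i in it and, for
   a block of 1s, by where it ends.  If w0 and w1 both start with 10, then in
   (w0 w1)^oo the blocks meeting the first |w0| positions look exactly as in
   w0^oo, because in both sequences the next two letters are 10.  Position |w0|
   carries a 1 followed by a 0, so it is the last letter of a block of 1s both in
   (w0 w1)^oo and (at position 0) in w1^oo, and sigma ends every block of 1s with
   the letter 2.  After it a new block starts at |w0| + 1, and from there on the
   block structure of (w0 w1)^oo is that of w1^oo shifted by |w0|. *)

From Stdlib Require Import ClassicalEpsilon.
From mathcomp Require Import all_boot.
From mathcomp Require Import zify.

Set Implicit Arguments.
Unset Strict Implicit.
Unset Printing Implicit Defensive.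

Lemma mkseqD (T : Type) (f : nat -> T) m n :
  mkseq f (m + n) = mkseq f m ++ mkseq (fun i => f (m + i)) n.
Proof.
rewrite /mkseq iotaD map_cat add0n; congr (_ ++ _).
by rewrite -[m in iota m]addn0 iotaDl -map_comp.
Qed.

Lemma sigma1SS L : sigma1 L.+2 = sigma1 L ++ [:: 1; 2].
Proof.
have nseq12C k : flatten (nseq k [:: 1; 2]) ++ [:: 1; 2]
               = [:: 1; 2] ++ flatten (nseq k [:: 1; 2]).
  by elim: k => [|k IHk] //=; rewrite IHk.
by rewrite /sigma1 /= negbK; case: (odd L); rewrite /= nseq12C.
Qed.

Lemma size_sigma1 L : size (sigma1 L) = L.
Proof.
elim/ltn_ind: L => -[|[|L]] IH //.
by rewrite sigma1SS size_cat IH // addn2.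
Qed.

Lemma nth_sigma1_last L : nth 0 (sigma1 L.+1) L = 2.
Proof.
elim/ltn_ind: L => -[|[|L]] IH //.
by rewrite sigma1SS nth_cat size_sigma1 ltnNge leqnSn subSnn.
Qed.

Definition is_run_end1 (a : nat -> bool) (i j : nat) :=
  i <= j /\ a j = false /\ (forall k, i <= k -> k < j -> a k = true).

Lemma is_run_end1_uniq a i j1 j2 :
  is_run_end1 a i j1 -> is_run_end1 a i j2 -> j1 = j2.
Proof.
move=> [ij1 [aj1 before1]] [ij2 [aj2 before2]].
case: (ltngtP j1 j2) => // [lt12 | lt21].
- by move: (before2 j1 ij1 lt12); rewrite aj1.
- by move: (before1 j2 ij2 lt21); rewrite aj2.
Qed.

Lemma run_end1_eq a i j : is_run_end1 a i j -> run_end1 a i = j.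
Proof.
move=> end_j; apply: is_run_end1_uniq (end_j).
exact: (epsilon_spec (inhabits 0) (is_run_end1 a i) (ex_intro _ j end_j)).
Qed.

Lemma is_run_end1_exists a i N :
  i <= N -> a N = false -> exists2 j, j <= N & is_run_end1 a i j.
Proof.
move=> iN aN.
have hasP : exists j, (i <= j) && ~~ a j by exists N; rewrite iN aN.
case: (ex_minnP hasP) => j /andP[ij /negbTE aj] minj.
exists j; first by apply: minj; rewrite iN aN.
split=> //; split=> // k ik kj; apply: contraTT kj => /negbTE ak.
by rewrite -leqNgt minj // ik ak.
Qed.

Lemma run_start_le a i : run_start a i <= i.
Proof. by elim: i => [|i IHi] //=; case: ifP => // _; apply: leqW. Qed.

Section RunsOfAShift.

Variables (a b : nat -> bool) (n N : nat).
Hypothesis a_shift_b : forall k, k <= N -> a (n + k) = b k.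

Lemma run_start_shift i : i <= N -> (0 < n -> a n.-1 != a n) ->
  run_start a (n + i) = n + run_start b i.
Proof.
move=> iN new_block; elim: i iN => [|i IHi] iN.
  by rewrite !addn0; case: n new_block a_shift_b => [|m] //= /(_ isT) /negbTE ->.
rewrite addnS /= -addnS !a_shift_b ?IHi ?(ltnW iN) //.
by case: (b i == b i.+1).
Qed.

Lemma run_end1_shift i : i <= N -> b N = false ->
  run_end1 a (n + i) = n + run_end1 b i.
Proof.
move=> iN bN; have [j jN end_j] := is_run_end1_exists iN bN.
rewrite (run_end1_eq end_j); apply: run_end1_eq.
case: end_j => ij [bj before_j]; split; first by rewrite leq_add2l.
split; first by rewrite a_shift_b.
move=> k ik kj; rewrite -(subnKC (leq_trans (leq_addr i n) ik)).
by rewrite a_shift_b ?before_j; lia.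
Qed.

Lemma Rinf_shift i : i <= N -> b N = false -> (0 < n -> a n.-1 != a n) ->
  Rinf a (n + i) = Rinf b i.
Proof.
move=> iN bN new_block.
rewrite /Rinf a_shift_b // run_start_shift // run_end1_shift //.
by rewrite -addnS !subnDl.
Qed.

End RunsOfAShift.

Lemma Rinf_last1 (a : nat -> bool) i : a i -> a i.+1 = false -> Rinf a i = 2.
Proof.
move=> ai ai1; rewrite /Rinf ai (@run_end1_eq _ _ i.+1).
  by rewrite subSn ?run_start_le // nth_sigma1_last.
split=> //; split=> // k ik ki.
by have -> : k = i by lia.
Qed.

Lemma Rinf_shift10 (a b : nat -> bool) n N i : i <= N -> b N = false ->
  (forall k, k <= N -> a (n + k) = b k) -> b 0 -> b 1 = false ->
  Rinf a (n + i) = Rinf b i.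
Proof.
move=> iN bN a_shift_b b0 b1.
have N_gt0 : 0 < N by rewrite lt0n; apply: contraTneq b0 => N0; rewrite -N0 bN.
have an : a n by rewrite -[n]addn0 a_shift_b.
have an1 : a n.+1 = false by rewrite -addn1 a_shift_b.
case: i iN => [|j] jN; first by rewrite addn0 !Rinf_last1.
pose c k := b k.+1.
have cN : c N.-1 = false by rewrite /c prednK.
have jN1 : j <= N.-1 by rewrite -ltnS prednK.
have -> : Rinf b j.+1 = Rinf c j.
  by rewrite -add1n (@Rinf_shift b c 1 N.-1) // b0 b1.
have a_shift_c k : k <= N.-1 -> a (n.+1 + k) = c k.
  by move=> kN; rewrite addSnnS a_shift_b // -(prednK N_gt0) ltnS.
by rewrite -addSnnS (Rinf_shift a_shift_c) // => _; rewrite an an1.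
Qed.

Lemma wpow_small w k : k < size w -> wpow w k = nth false w k.
Proof. by move=> kw; rewrite /wpow modn_small. Qed.

Lemma wpow_sizeD w k : wpow w (size w + k) = wpow w k.
Proof. by rewrite /wpow modnDl. Qed.

Section WpowCat.

Variables (u v : seq bool) (m : nat).
Hypotheses (mu : m <= size u) (mv : m <= size v) (uv_take : take m u = take m v).

Lemma nth_prefix r : r < m -> nth false v r = nth false u r.
Proof. by move=> rm; rewrite -(nth_take _ rm) -uv_take nth_take. Qed.

Lemma wpow_catl k : k < size u + m -> wpow (u ++ v) k = wpow u k.
Proof.
case: (ltnP k (size u)) => [ku _ | ku].
  by rewrite !wpow_small ?nth_cat ?ku // size_cat ltn_addr.
have [r ->] : exists r, k = size u + r by exists (k - size u); rewrite subnKC.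
rewrite ltn_add2l => km.
rewrite wpow_sizeD wpow_small ?size_cat ?ltn_add2l ?(leq_trans km mv) //.
by rewrite nth_cat ltnNge leq_addr addKn nth_prefix // wpow_small // (leq_trans km mu).
Qed.

Lemma wpow_catr k : k < size v + m -> wpow (u ++ v) (size u + k) = wpow v k.
Proof.
case: (ltnP k (size v)) => [kv _ | kv].
  by rewrite !wpow_small ?size_cat ?ltn_add2l // nth_cat ltnNge leq_addr addKn.
have [r ->] : exists r, k = size v + r by exists (k - size v); rewrite subnKC.
rewrite ltn_add2l => km.
have ru : r < size u := leq_trans km mu.
rewrite addnA -size_cat !wpow_sizeD !wpow_small ?size_cat ?(leq_trans km mv) ?ltn_addr //.
by rewrite nth_cat ru nth_prefix.
Qed.

End WpowCat.

Section Cat10.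

Variables u v : seq bool.
Hypotheses (u10 : take 2 u = [:: true; false]) (v10 : take 2 v = [:: true; false]).

Let size_ge2 w : take 2 w = [:: true; false] -> 2 <= size w.
Proof. by case: w => [|x [|y w]]. Qed.

Let nth10 w : take 2 w = [:: true; false] ->
  nth false w 0 = true /\ nth false w 1 = false.
Proof. by case: w => [|x [|y w]] //= [-> ->]. Qed.

Let uv_take : take 2 u = take 2 v. Proof. by rewrite u10 v10. Qed.

Lemma Rinf_wpow_catl i : i < size u ->
  Rinf (wpow (u ++ v)) i = Rinf (wpow u) i.
Proof.
move=> iu; have u2 := size_ge2 u10; have [_ u1] := nth10 u10.
have agree k : k <= (size u).+1 -> wpow (u ++ v) (0 + k) = wpow u k.
  by move=> kN; apply: (wpow_catl u2 (size_ge2 v10) uv_take); rewrite addn2 ltnS.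
rewrite -[i]add0n (Rinf_shift agree) ?(leqW (ltnW iu)) //.
by rewrite -addn1 wpow_sizeD wpow_small.
Qed.

Lemma Rinf_wpow_catr i : i < size v ->
  Rinf (wpow (u ++ v)) (size u + i) = Rinf (wpow v) i.
Proof.
move=> iv; have v2 := size_ge2 v10; have [v0 v1] := nth10 v10.
have agree k : k <= (size v).+1 -> wpow (u ++ v) (size u + k) = wpow v k.
  by move=> kN; apply: (wpow_catr (size_ge2 u10) v2 uv_take); rewrite addn2 ltnS.
rewrite (Rinf_shift10 _ _ agree) //.
- exact: leqW (ltnW iv).
- by rewrite -addn1 wpow_sizeD wpow_small.
- by rewrite wpow_small // ltnW.
- by rewrite wpow_small.
Qed.

End Cat10.

Theorem lemma8p7 (w0 w1 : seq bool) :
  (exists u0, w0 = true :: false :: u0) ->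
  (exists u1, w1 = true :: false :: u1) ->
  Rw (w0 ++ w1) = Rw w0 ++ Rw w1.
Proof.
move=> [u0 w0E] [u1 w1E].
have w0_10 : take 2 w0 = [:: true; false] by rewrite w0E /= take0.
have w1_10 : take 2 w1 = [:: true; false] by rewrite w1E /= take0.
rewrite /Rw; have [-> -> ->] : [/\ all id (w0 ++ w1) = false, all id w0 = false
                                 & all id w1 = false] by rewrite w0E w1E; split.
rewrite size_cat mkseqD; congr (_ ++ _);
  apply/eq_in_map => i; rewrite mem_iota => /andP[_ ilt].
- exact: Rinf_wpow_catl.
- exact: Rinf_wpow_catr.
Qed.
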